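(* Let $(G,c)$ be a $k$-terminal network with terminal set $Q$ such that for every $S\subset Q$ with $S\neq\emptyset,Q$ the minimum-cost $S$-separating cut of $(G,c)$ is unique. Let $A_{G,c}$ be its cutset-edge incidence matrix. Then there exists an edge-cost function $\hat c:E(G)\to\mathbb{R}^+$ such that every mimicking network $(G',c')$ of $(G,\hat c)$ satisfies $|E(G')|\ge \mathrm{rank}(A_{G,c})$.
   Context: A $k$-terminal network $(G,c)$ is an undirected graph with edge costs $c:E(G)\to\mathbb{R}^+$ and terminal set $Q\subseteq V(G)$, $|Q|=k$. For $S\subset Q$, $\bar S=Q\setminus S$; a cut $(W,V(G)\setminus W)$ is $S$-separating if $W\cap Q\in\{S,\bar S\}$; its cutset is the set of edges with exactly one endpoint in $W$ and its cost is the total cost of the cutset. The minimum $S$-separating cut is unique if every other $S$-separating cut has strictly larger cost. $\mathrm{mincut}_{G,c}(S,\bar S)$ is the minimum cost of an $S$-separating cut. Cutset-edge incidence matrix: fix an enumeration $S_1,\dots,S_m$, $m=2^{k-1}-1$, of representatives of the distinct nontrivial bipartitions $Q=S_i\cup\bar S_i$, and for each $i$ fix a minimum-cost $S_i$-separating cut (ties broken arbitrarily); $A_{G,c}\in\{0,1\}^{m\times E(G)}$ has $(A_{G,c})_{i,e}=1$ iff $e$ is in the cutset of that cut. A mimicking network of $(G,\hat c)$ is a $k$-terminal network $(G',c')$ with the same terminal set $Q$ and $\mathrm{mincut}_{G',c'}(S,\bar S)=\mathrm{mincut}_{G,\hat c}(S,\bar S)$ for all $S\subset Q$, $S\neq\emptyset,Q$.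 *)

From HB Require Import structures.
From mathcomp Require Import all_boot all_order all_algebra.
Set Implicit Arguments. Unset Strict Implicit. Unset Printing Implicit Defensive.
Import Order.TTheory GRing.Theory Num.Theory.
Local Open Scope ring_scope.

(* A k-terminal network: vertex type V : finType, n edges indexed by 'I_n,
   with endpoints [ends e], terminals given by an injective map q : T -> V
   from a terminal index type T with #|T| = k (so Q = q @: T). *)

Definition simple_graph (V : finType) (n : nat) (ends : 'I_n -> V * V) : Prop :=
  (forall e, (ends e).1 != (ends e).2) /\
  (forall e f, ends e = ends f \/ ends e = ((ends f).2, (ends f).1) -> e = f).

Definition pos_costs (R : realFieldType) (n : nat) (c : 'I_n -> R) : Prop :=
  forall e, 0 < c e.

Definition in_cutset (V : finType) (n : nat) (ends : 'I_n -> V * V)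
  (W : {set V}) (e : 'I_n) : bool :=
  ((ends e).1 \in W) != ((ends e).2 \in W).

Definition cut_cost (R : realFieldType) (V : finType) (n : nat)
  (ends : 'I_n -> V * V) (c : 'I_n -> R) (W : {set V}) : R :=
  \sum_(e < n | in_cutset ends W e) c e.

Definition nontriv (T : finType) (S : {set T}) : bool :=
  (S != set0) && (S != setT).

Definition separating (T V : finType) (q : T -> V) (S : {set T}) (W : {set V})
  : bool :=
  ([set t | q t \in W] == S) || ([set t | q t \in W] == ~: S).

(* mincut_{G,c}(S, Q\S): minimum cost of an S-separating cut
   (q @: S is always S-separating when q is injective) *)
Definition mincut (R : realFieldType) (T V : finType) (q : T -> V) (n : nat)
  (ends : 'I_n -> V * V) (c : 'I_n -> R) (S : {set T}) : R :=
  \big[Num.min/cut_cost ends c (q @: S)]_(W : {set V} | separating q S W)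
     cut_cost ends c W.

Definition unique_mincut (R : realFieldType) (T V : finType) (q : T -> V)
  (n : nat) (ends : 'I_n -> V * V) (c : 'I_n -> R) (S : {set T}) : Prop :=
  exists W0 : {set V}, separating q S W0 /\
    forall W : {set V}, separating q S W -> W != W0 -> W != ~: W0 ->
      cut_cost ends c W0 < cut_cost ends c W.

(* rep enumerates representatives of the distinct nontrivial bipartitions
   {S, Q\S} of Q, each exactly once *)
Definition bipartition_enum (T : finType) (m : nat) (rep : 'I_m -> {set T})
  : Prop :=
  (forall i, nontriv (rep i)) /\
  (forall S : {set T}, nontriv S ->
     (exists i, rep i = S \/ rep i = ~: S) /\
     (forall i j, (rep i = S \/ rep i = ~: S) -> (rep j = S \/ rep j = ~: S) ->
        i = j)).

Definition mincut_selection (R : realFieldType) (T V : finType) (q : T -> V)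
  (n : nat) (ends : 'I_n -> V * V) (c : 'I_n -> R) (m : nat)
  (rep : 'I_m -> {set T}) (sel : 'I_m -> {set V}) : Prop :=
  forall i, separating q (rep i) (sel i) /\
            cut_cost ends c (sel i) = mincut q ends c (rep i).

Definition cutset_matrix (R : realFieldType) (V : finType) (n : nat)
  (ends : 'I_n -> V * V) (m : nat) (sel : 'I_m -> {set V}) : 'M[R]_(m, n) :=
  \matrix_(i < m, e < n) (in_cutset ends (sel i) e)%:R.

Definition mimicking (R : realFieldType) (T V V' : finType)
  (q : T -> V) (n : nat) (ends : 'I_n -> V * V) (c : 'I_n -> R)
  (q' : T -> V') (n' : nat) (ends' : 'I_n' -> V' * V') (c' : 'I_n' -> R)
  : Prop :=
  forall S : {set T}, nontriv S -> mincut q' ends' c' S = mincut q ends c S.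

From HB Require Import structures.
From mathcomp Require Import all_boot all_order all_algebra.
Set Implicit Arguments. Unset Strict Implicit. Unset Printing Implicit Defensive.
Import Order.TTheory GRing.Theory Num.Theory.
Local Open Scope ring_scope.

(* Let A be the cutset-edge incidence matrix and r its rank.  Cost vectors
   x (rows of length n) for which every selected cut sel i is the strict
   minimum (rep i)-separating cut form an open polyhedral cone C, and c lies
   in C by the uniqueness hypothesis.  For x in C the vector of minimum cut
   values is x A^T.  On the other hand, the minimum cut vector of any network
   with n' edges lies in the row space of an n' x m 0/1 matrix.  For each of
   the finitely many (r-1) x m 0/1 matrices B, the vectors x with x A^T in
   the row space of B form a subspace, which misses some point of C since
   rank A = r > r - 1.  A cone cannot be covered by finitely many such
   subspaces (pigeonhole on a line inside C), so some chat in C avoids them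
   all; a mimicking network of (G, chat) with n' < r edges would put
   chat A^T in one of them. *)

Section Subspace.
Variables (R : fieldType) (U : lmodType R).

Definition subspace (P : pred U) : Prop :=
  forall a x y, P x -> P y -> P (a *: x + y).

Variables (P : pred U) (P_sub : subspace P).

Lemma subspaceZ a x : P x -> P (a *: x).
Proof.
move=> Px; have P0 : P 0 by have := P_sub (-1) Px Px; rewrite scaleN1r addNr.
by have := P_sub a Px P0; rewrite addr0.
Qed.

Lemma subspaceD x y : P x -> P y -> P (x + y).
Proof. by move=> Px Py; have := P_sub 1 Px Py; rewrite scale1r. Qed.

Lemma subspace_line x y a b :
  a != b -> P (x + a *: y) -> P (x + b *: y) -> P x /\ P y.
Proof.
move=> ab Pa Pb.
have Py : P y.
  have -> : y = (a - b)^-1 *: ((x + a *: y) + (-1) *: (x + b *: y)).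
    by rewrite scaleN1r opprD addrACA addrN add0r -scalerBl scalerA
               mulVf ?subr_eq0 // scale1r.
  by apply: subspaceZ; apply: subspaceD => //; exact: subspaceZ.
split=> //; rewrite -(addrK (a *: y) x).
by apply: subspaceD => //; rewrite -scaleNr; exact: subspaceZ.
Qed.

End Subspace.

Section ConeAvoidance.
Variables (R : numFieldType) (U : lmodType R).

Variable C : pred U.
Hypothesis C_add : forall a x y, 0 <= a -> C x -> C y -> C (x + a *: y).
Hypothesis C_absorb : forall x z, C x -> exists mu, C (mu *: x + z).

Lemma subspace_misses_cone (P : pred U) x z :
  subspace P -> C x -> ~~ P z -> exists2 y, C y & ~~ P y.
Proof.
move=> P_sub Cx Pz; have [Px|Px] := boolP (P x); last by exists x.
have [mu Cmu] := C_absorb z Cx.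
exists (mu *: x + z) => //; apply: contra Pz => Pmu.
by rewrite -(addKr (mu *: x) z) -scaleNr; exact: P_sub.
Qed.

Variables (I : finType) (P : I -> pred U).
Hypothesis P_sub : forall i, subspace (P i).
Hypothesis P_miss : forall i, exists2 y, C y & ~~ P i y.

(* Induction on the list of subspaces to avoid: given x avoiding the tail
   and y missing the head P_i, one of the (size s).+2 points x + l y avoids
   them all, since each subspace contains at most one of these points. *)
Lemma cone_avoids_seq (x0 : U) (s : seq I) :
  C x0 -> exists2 x, C x & all (fun i => ~~ P i x) s.
Proof.
move=> Cx0; elim: s => [|i s [x Cx xs]]; first by exists x0.
have [y Cy Piy] := P_miss i.
pose f (l : 'I_(size s).+2) := x + l%:R *: y.
have Cf l : C (f l) by apply: C_add; rewrite ?ler0n.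
have [l fl|none] := pickP (fun l => all (fun j => ~~ P j (f l)) (i :: s)).
  by exists (f l).
have hit l : exists j, (j \in i :: s) && P j (f l).
  by move/negbT/allPn: (none l) => [j js /negPn Pj]; exists j; rewrite js.
pose g l := xchoose (hit l).
have gs l : g l \in i :: s by case/andP: (xchooseP (hit l)).
have gP l : P (g l) (f l) by case/andP: (xchooseP (hit l)).
have g_inj : injective g.
  move=> l l' gl; apply/eqP; apply: contraT => ll'.
  have [Px Py] : P (g l) x /\ P (g l) y.
    have Pg_sub := @P_sub (g l).
    apply: (subspace_line Pg_sub _ (gP l)); last by rewrite gl; exact: gP.
    by rewrite eqr_nat.
  move: (gs l); rewrite inE => /orP[/eqP gi|gs']; first by rewrite -gi Py in Piy.
  by move/allP: xs => /(_ _ gs'); rewrite Px.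
have g_sub : g @: setT \subset [set j in i :: s].
  by apply/subsetP => _ /imsetP[l _ ->]; rewrite inE gs.
have := subset_leq_card g_sub; rewrite card_imset // cardsT card_ord cardsE.
by move=> /leq_trans /(_ (card_size (i :: s))); rewrite ltnn.
Qed.

Lemma cone_avoids (x0 : U) : C x0 -> exists2 x, C x & forall i, ~~ P i x.
Proof.
move=> /(cone_avoids_seq (enum I))[x Cx /allP xI].
by exists x => // i; apply: xI; rewrite mem_enum.
Qed.

End ConeAvoidance.

Section OpenCone.
Variables (R : realFieldType) (U : lmodType R) (I : finType).
Variables (active : pred I) (L : I -> U -> R).
Hypothesis L_linear : forall l a x y, L l (a *: x + y) = a * L l x + L l y.

Definition open_cone (x : U) : bool := [forall (l | active l), 0 < L l x].

Lemma open_coneP x : reflect (forall l, active l -> 0 < L l x) (open_cone x).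
Proof. exact: forall_inP. Qed.

Lemma open_cone_add a x y :
  0 <= a -> open_cone x -> open_cone y -> open_cone (x + a *: y).
Proof.
move=> a_ge0 /open_coneP Cx /open_coneP Cy; apply/open_coneP => l act_l.
rewrite addrC L_linear; apply: ltr_wpDl; last exact: Cx.
by rewrite mulr_ge0 // ltW // Cy.
Qed.

Lemma open_cone_absorb x z : open_cone x -> exists mu, open_cone (mu *: x + z).
Proof.
move=> /open_coneP Cx.
pose mu := \sum_(l | active l) `|L l z / L l x| + 1.
exists mu; apply/open_coneP => l act_l.
have mu_gt : `|L l z / L l x| < mu.
  rewrite /mu (bigD1 l) //= -addrA ltrDl ltr_pwDr ?ltr01 //.
  by rewrite sumr_ge0.
have : - L l z / L l x < mu.
  by rewrite mulNr; apply: le_lt_trans mu_gt; rewrite -normrN ler_norm.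
by rewrite ltr_pdivrMr ?Cx // L_linear -subr_gt0 opprK.
Qed.

End OpenCone.

Section ZeroOneSpans.
Variable R : fieldType.

Definition zero_one p m (B : 'M[bool]_(p, m)) : 'M[R]_(p, m) :=
  map_mx (fun b : bool => b%:R) B.

Lemma zero_one_pad p k m (B : 'M[bool]_(p, m)) :
  (p <= k)%N -> exists B' : 'M[bool]_(k, m), (zero_one B <= zero_one B')%MS.
Proof.
move=> le_pk.
pose B' : 'M[bool]_(k, m) :=
  \matrix_(i, j) if insub (val i) is Some i' then B i' j else false.
exists B'; apply/row_subP => i.
have -> : row i (zero_one B) = row (widen_ord le_pk i) (zero_one B').
  by apply/rowP => j; rewrite !mxE /= valK.
exact: row_sub.
Qed.

Lemma preimage_subspace n m k (F : 'M[R]_(n, m)) (B : 'M[R]_(k, m)) :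
  subspace (fun x : 'rV_n => (x *m F <= B)%MS).
Proof.
move=> a x y xF yF; rewrite mulmxDl -scalemxAl.
by apply: addmx_sub => //; apply: scalemx_sub.
Qed.

(* If x A^T always lay in the row space of B, so would A^T, forcing
   rank A <= k. *)
Lemma rank_escape m n k (A : 'M[R]_(m, n)) (B : 'M[R]_(k, m)) :
  (k < \rank A)%N -> exists z : 'rV_n, ~~ (z *m A^T <= B)%MS.
Proof.
move=> lt_kA.
have /existsP[e Ae] : [exists e : 'I_n, ~~ (delta_mx (0 : 'I_1) e *m A^T <= B)%MS].
  apply: contraTT lt_kA => /existsPn all_in.
  have sub : (A^T <= B)%MS by apply/row_subP => e; rewrite rowE; apply/negPn.
  by rewrite -leqNgt -mxrank_tr (leq_trans (mxrankS sub)) ?rank_leq_row.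
by exists (delta_mx 0 e).
Qed.

End ZeroOneSpans.

Section Cuts.
Variables (R : realFieldType) (T V : finType) (q : T -> V) (n : nat).
Variable ends : 'I_n -> V * V.

Lemma in_cutsetC W e : in_cutset ends (~: W) e = in_cutset ends W e.
Proof. by rewrite /in_cutset !inE; case: (_ \in W); case: (_ \in W). Qed.

Lemma cut_costC (c : 'I_n -> R) W : cut_cost ends c (~: W) = cut_cost ends c W.
Proof. by apply: eq_bigl => e; rewrite in_cutsetC. Qed.

Lemma separatingC S W : separating q S (~: W) = separating q S W.
Proof.
rewrite /separating; have -> : [set t | q t \in ~: W] = ~: [set t | q t \in W].
  by apply/setP => t; rewrite !inE.
by rewrite (can2_eq setCK setCK) (inj_eq (@setC_inj _)) orbC.
Qed.

Lemma mincut_le (c : 'I_n -> R) S W :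
  separating q S W -> mincut q ends c S <= cut_cost ends c W.
Proof. by move=> sepW; rewrite /mincut (bigD1 W) //= ge_min lexx. Qed.

Lemma mincut_attained (c : 'I_n -> R) S :
  exists W, mincut q ends c S = cut_cost ends c W.
Proof.
rewrite /mincut; elim/big_ind: _ => [|a b [Wa ->] [Wb ->]|W _].
- by exists (q @: S).
- by case: leP => _; [exists Wa | exists Wb].
- by exists W.
Qed.

Definition strict_mincut (c : 'I_n -> R) S W0 : Prop :=
  separating q S W0 /\
  forall W, separating q S W -> W != W0 -> W != ~: W0 ->
    cut_cost ends c W0 < cut_cost ends c W.

Lemma strict_mincut_eq (c1 c2 : 'I_n -> R) S W0 :
  c1 =1 c2 -> strict_mincut c1 S W0 -> strict_mincut c2 S W0.
Proof.
move=> c12 [sep0 min0]; have cost12 W : cut_cost ends c1 W = cut_cost ends c2 W.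
  by apply: eq_bigr => e _; rewrite c12.
by split=> // W sepW W1 W2; rewrite -!cost12; exact: min0.
Qed.

Lemma strict_mincutC c S W0 : strict_mincut c S W0 -> strict_mincut c S (~: W0).
Proof.
move=> [sep0 min0]; split; first by rewrite separatingC.
move=> W sepW W1 W2; rewrite cut_costC; apply: min0 => //.
by rewrite -[W0]setCK.
Qed.

(* Any minimum cut is the unique one or its complement, hence strict too. *)
Lemma minimal_cut_strict c S W0 W :
  strict_mincut c S W0 -> separating q S W ->
  cut_cost ends c W = mincut q ends c S -> strict_mincut c S W.
Proof.
move=> strict0 sepW costW; have [sep0 min0] := strict0.
have [->|W1] := eqVneq W W0; first by [].
have [->|W2] := eqVneq W (~: W0); first exact: strict_mincutC.
have := min0 W sepW W1 W2; rewrite costW => /lt_le_trans/(_ (mincut_le c sep0)).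
by rewrite ltxx.
Qed.

Lemma strict_mincut_value c S W0 :
  injective q -> strict_mincut c S W0 -> mincut q ends c S = cut_cost ends c W0.
Proof.
move=> q_inj [sep0 min0]; apply/le_anti; rewrite mincut_le //=.
have costW W : separating q S W -> cut_cost ends c W0 <= cut_cost ends c W.
  move=> sepW; have [->|W1] := eqVneq W W0; first by [].
  have [->|W2] := eqVneq W (~: W0); first by rewrite cut_costC.
  exact/ltW/min0.
rewrite /mincut; elim/big_ind: _ => [|a b ha hb|W /costW //].
  by apply: costW; apply/orP; left; apply/eqP/setP => t; rewrite inE mem_imset.
by rewrite le_min ha hb.
Qed.

Lemma cut_cost_linear a (x y : 'rV[R]_n) W :
  cut_cost ends ((a *: x + y) 0) W =
  a * cut_cost ends (x 0) W + cut_cost ends (y 0) W.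
Proof.
by rewrite /cut_cost mulr_sumr -big_split; apply: eq_bigr => e _; rewrite !mxE.
Qed.

Lemma cut_cost_row m (sel : 'I_m -> {set V}) (c : 'I_n -> R) :
  \row_i cut_cost ends c (sel i) = (\row_e c e) *m (cutset_matrix R ends sel)^T.
Proof.
apply/rowP => i; rewrite !mxE /cut_cost big_mkcond /=; apply: eq_bigr => e _.
by rewrite !mxE; case: in_cutset; rewrite ?mulr1 ?mulr0.
Qed.

(* The minimum cut values of any network with n edges form a vector in the
   row space of an n x m 0/1 matrix (the transposed incidence matrix of a
   choice of minimum cuts). *)
Lemma mincut_vector_span (c : 'I_n -> R) m (rep : 'I_m -> {set T}) :
  exists B : 'M[bool]_(n, m),
    (\row_i mincut q ends c (rep i) <= zero_one R B)%MS.
Proof.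
have attained i : exists W, mincut q ends c (rep i) == cut_cost ends c W.
  by have [W ->] := mincut_attained c (rep i); exists W.
pose sel i := xchoose (attained i).
exists (\matrix_(e, i) in_cutset ends (sel i) e).
have -> : \row_i mincut q ends c (rep i) = \row_i cut_cost ends c (sel i).
  by apply/rowP => i; rewrite !mxE; exact/eqP/(xchooseP (attained i)).
have -> : zero_one R (\matrix_(e, i) in_cutset ends (sel i) e) =
          (cutset_matrix R ends sel)^T by apply/matrixP => e i; rewrite !mxE.
by rewrite cut_cost_row submxMl.
Qed.

End Cuts.

Section CutCone.
Variables (R : realFieldType) (T V : finType) (q : T -> V) (n : nat).
Variables (ends : 'I_n -> V * V) (m : nat).
Variables (rep : 'I_m -> {set T}) (sel : 'I_m -> {set V}).

(* Linear forms defining the cone of cost vectors x that are positive and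
   for which each sel i is the strict minimum (rep i)-separating cut: the
   coordinates, and the cost gaps between competing cuts W and sel i. *)
Definition cut_gap (l : 'I_n + ('I_m * {set V})) (x : 'rV[R]_n) : R :=
  match l with
  | inl e => x 0 e
  | inr (i, W) => cut_cost ends (x 0) W - cut_cost ends (x 0) (sel i)
  end.

Definition cut_gap_active (l : 'I_n + ('I_m * {set V})) : bool :=
  match l with
  | inl _ => true
  | inr (i, W) => [&& separating q (rep i) W, W != sel i & W != ~: sel i]
  end.

Definition cut_cone : pred 'rV[R]_n := open_cone cut_gap_active cut_gap.

Lemma cut_gap_linear l a x y :
  cut_gap l (a *: x + y) = a * cut_gap l x + cut_gap l y.
Proof.
case: l => [e|[i W]] /=; first by rewrite !mxE.
by rewrite !cut_cost_linear mulrBr addrACA opprD.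
Qed.

Lemma cut_cone_add a x y :
  0 <= a -> cut_cone x -> cut_cone y -> cut_cone (x + a *: y).
Proof. exact/open_cone_add/cut_gap_linear. Qed.

Lemma cut_cone_absorb x z : cut_cone x -> exists mu, cut_cone (mu *: x + z).
Proof. exact/open_cone_absorb/cut_gap_linear. Qed.

Hypothesis sel_sep : forall i, separating q (rep i) (sel i).

Lemma cut_coneP x :
  cut_cone x <->
  pos_costs (x 0) /\ forall i, strict_mincut q ends (x 0) (rep i) (sel i).
Proof.
split=> [/open_coneP Cx|[x_pos x_strict]].
  split=> [e|i]; first exact: (Cx (inl e)).
  split=> // W sepW W1 W2; rewrite -subr_gt0.
  by apply: (Cx (inr (i, W))); rewrite /= sepW W1 W2.
apply/open_coneP => -[e _|[i W] /and3P[sepW W1 W2]] /=; first exact: x_pos.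
by rewrite subr_gt0; apply: (x_strict i).2.
Qed.

Lemma unique_mincuts_in_cone (c : 'I_n -> R) :
  pos_costs c -> (forall S, nontriv S -> unique_mincut q ends c S) ->
  (forall i, nontriv (rep i)) -> mincut_selection q ends c rep sel ->
  cut_cone (\row_e c e).
Proof.
move=> c_pos c_unique rep_nontriv sel_min.
have c_row : c =1 (\row_e c e) 0 by move=> e; rewrite mxE.
apply/cut_coneP; split=> [e|i]; first by rewrite -c_row.
apply: strict_mincut_eq c_row _.
have [W0 strict0] := c_unique _ (rep_nontriv i).
have [sep_i cost_i] := sel_min i.
exact: minimal_cut_strict strict0 sep_i cost_i.
Qed.

Lemma cut_cone_mincuts x :
  injective q -> cut_cone x ->
  \row_i mincut q ends (x 0) (rep i) = x *m (cutset_matrix R ends sel)^T.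
Proof.
move=> q_inj /cut_coneP[_ x_strict].
have x_row : \row_e x 0 e = x by apply/rowP => e; rewrite mxE.
rewrite -[in RHS]x_row -cut_cost_row; apply/rowP => i; rewrite !mxE.
exact: strict_mincut_value q_inj (x_strict i).
Qed.

End CutCone.

Theorem lemma3p2 (R : realFieldType) (T V : finType) (q : T -> V)
  (n : nat) (ends : 'I_n -> V * V) (c : 'I_n -> R)
  (m : nat) (rep : 'I_m -> {set T}) (sel : 'I_m -> {set V}) :
  injective q -> simple_graph ends -> pos_costs c ->
  (forall S : {set T}, nontriv S -> unique_mincut q ends c S) ->
  bipartition_enum rep -> mincut_selection q ends c rep sel ->
  exists chat : 'I_n -> R, pos_costs chat /\
    forall (V' : finType) (q' : T -> V') (n' : nat)
           (ends' : 'I_n' -> V' * V') (c' : 'I_n' -> R),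
      injective q' -> simple_graph ends' -> pos_costs c' ->
      mimicking q ends chat q' ends' c' ->
      (\rank (cutset_matrix R ends sel) <= n')%N.
Proof.
move=> q_inj _ c_pos c_unique [rep_nontriv _] sel_min.
set A := cutset_matrix R ends sel.
have [rank0|rank_gt0] := posnP (\rank A).
  by exists c; split=> // *; rewrite rank0.
have sel_sep i : separating q (rep i) (sel i) by case: (sel_min i).
pose C := cut_cone (R := R) q ends rep sel.
have C_add a x x' : 0 <= a -> C x -> C x' -> C (x + a *: x').
  exact: cut_cone_add.
have C_absorb x z : C x -> exists mu, C (mu *: x + z) by exact: cut_cone_absorb.
have C_c : C (\row_e c e) by exact: unique_mincuts_in_cone.
pose P (B : 'M[bool]_((\rank A).-1, m)) (x : 'rV[R]_n) :=
  (x *m A^T <= zero_one R B)%MS.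
have P_sub B : subspace (P B) by exact: preimage_subspace.
have P_miss B : exists2 x, C x & ~~ P B x.
  have [|z Pz] := rank_escape (A := A) (zero_one R B).
    by rewrite ltn_predL.
  have [x Cx Px] := subspace_misses_cone C_absorb (P_sub B) C_c Pz.
  by exists x.
have [y C_y avoid_y] := cone_avoids C_add P_sub P_miss C_c.
have [y_pos _] := (cut_coneP ends sel_sep y).1 C_y.
exists (y 0); split=> // V' q' n' ends' c' _ _ _ mimic.
rewrite leqNgt; apply/negP => n'_lt.
have [B' span'] := mincut_vector_span q' ends' c' rep.
have [|B B'B] := zero_one_pad R B' (_ : n' <= (\rank A).-1)%N.
  by rewrite -ltnS prednK.
apply: (negP (avoid_y B)); rewrite /P -(cut_cone_mincuts sel_sep q_inj C_y).
have -> : \row_i mincut q ends (y 0) (rep i) = \row_i mincut q' ends' c' (rep i).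
  by apply/rowP => i; rewrite !mxE mimic.
exact: submx_trans span' B'B.
Qed.
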